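(* Let $Y$ be a weakly uniformly convex geodesic space satisfying: for every $a\in Y$ and every $\varepsilon>0$ there exists $s>0$ such that $\inf_{r\ge s}\delta_Y(a,r,\varepsilon)>0$. Then $Y$ has property (C) with $\Psi(y,r,\varepsilon)=\delta_Y(y,r,\varepsilon)$ for all $y\in Y$, $r>0$, $\varepsilon\in(0,2]$; that is: (C1) for all $y\in Y$, $r>0$, $\varepsilon\in(0,2]$ and all $x,z\in Y$ with $d(x,y)=r$ and $d(y,z)\ge r$, if $w$ lies on a geodesic segment from $y$ to $z$ with $d(y,w)=r$, then $r+d(x,z)\le d(y,z)+\delta_Y(y,r,\varepsilon)r$ implies $d(w,x)\le\varepsilon r$; (C2) for all $y\in Y$ and $\varepsilon\in(0,2]$ there exists $s>0$ such that $\inf_{r\ge s}\delta_Y(y,r,\varepsilon)>0$.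
   Context: A geodesic space is a metric space in which any two points are joined by a geodesic path (a distance-preserving map from an interval $[0,l]$); its image is a geodesic segment. The modulus of convexity of $Y$ is \[\delta_Y(a,r,\varepsilon)=\inf\{1-d(a,m(x,y))/r : d(a,x)\le r,\ d(a,y)\le r,\ d(x,y)\ge\varepsilon r\}\] for $a\in Y$, $r>0$, $\varepsilon\in(0,2]$, where $m(x,y)$ ranges over midpoints of geodesic segments from $x$ to $y$; $Y$ is weakly uniformly convex if $\delta_Y(a,r,\varepsilon)>0$ for all such $a,r,\varepsilon$. *)

(* reals are an abstract R : realType,
   the modulus of convexity is extended-real valued (inf of empty set = +oo). *)
From HB Require Import structures.
From mathcomp Require Import all_boot all_order all_algebra.
From mathcomp Require Import all_classical all_reals.
From mathcomp Require Import ereal.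
Set Implicit Arguments. Unset Strict Implicit. Unset Printing Implicit Defensive.
Import Order.TTheory GRing.Theory Num.Theory.
Local Open Scope ring_scope.
Local Open Scope classical_set_scope.

Section GeodesicDefs.
Variables (R : realType) (Y : Type) (d : Y -> Y -> R).

Definition is_metric : Prop :=
  (forall x y, 0 <= d x y) /\
  (forall x y, d x y = 0 <-> x = y) /\
  (forall x y, d x y = d y x) /\
  (forall x y z, d x z <= d x y + d y z).

Definition geodesic_path (gamma : R -> Y) (l : R) (x y : Y) : Prop :=
  0 <= l /\ gamma 0 = x /\ gamma l = y /\
  (forall s t, 0 <= s <= l -> 0 <= t <= l -> d (gamma s) (gamma t) = `|s - t|).

Definition geodesic_space : Prop :=
  forall x y, exists gamma l, geodesic_path gamma l x y.

Definition on_geodesic_segment (x y w : Y) : Prop :=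
  exists gamma l, geodesic_path gamma l x y /\
    exists t, 0 <= t <= l /\ w = gamma t.

Definition is_midpoint (x y m : Y) : Prop :=
  exists gamma l, geodesic_path gamma l x y /\ m = gamma (l / 2).

Definition modulus_convexity (a : Y) (r eps : R) : \bar R :=
  ereal_inf [set v : \bar R | exists x y m,
      [/\ d a x <= r, d a y <= r, eps * r <= d x y, is_midpoint x y m
        & v = ((1 - d a m / r)%:E)]].

Definition weakly_uniformly_convex : Prop :=
  forall a r eps, 0 < r -> 0 < eps <= 2 ->
    (0 < modulus_convexity a r eps)%E.

End GeodesicDefs.

(** Suppose (C1) fails, i.e. [d(w,x) > eps r], and let [m] be a midpoint of
    [w] and [x] and [delta = delta_Y(y,r,eps)]. Convexity at [y] gives
    [d(y,m) <= r - delta r]. The hypothesis on [d(x,z)] puts both [w] and [x]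
    in the closed ball of radius [rho = d(w,z) + delta r] about [z], so weak
    uniform convexity at [z] gives [d(z,m) < rho]. Adding up,
    [d(y,z) <= d(y,m) + d(m,z) < r + d(w,z) = d(y,z)], a contradiction.
    (C2) is the hypothesis itself. *)
From HB Require Import structures.
From mathcomp Require Import all_boot all_order all_algebra.
From mathcomp Require Import all_classical all_reals.
From mathcomp Require Import ereal.
From mathcomp Require Import lra.
Import Order.TTheory GRing.Theory Num.Theory.
Local Open Scope ring_scope.
Local Open Scope classical_set_scope.

Section ModulusConvexity.
Context {R : realType} {Y : Type} {d : Y -> Y -> R}.

Lemma modulus_convexity_le_midpoint {a p q m : Y} {r eps : R} :
  d a p <= r -> d a q <= r -> eps * r <= d p q -> is_midpoint d p q m ->
  (modulus_convexity d a r eps <= (1 - d a m / r)%:E)%E.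
Proof. by move=> ap aq pq mpq; apply: ereal_inf_lbound; exists p, q, m. Qed.

Lemma modulus_convexity_fin_num {a p q m : Y} {r eps : R} :
  (0 < modulus_convexity d a r eps)%E ->
  d a p <= r -> d a q <= r -> eps * r <= d p q -> is_midpoint d p q m ->
  modulus_convexity d a r eps \is a fin_num.
Proof.
move=> mc0 ap aq pq mpq.
have := modulus_convexity_le_midpoint ap aq pq mpq.
by case: (modulus_convexity d a r eps) mc0.
Qed.

Lemma modulus_convexity_midpoint_le {a p q m : Y} {r eps : R} :
  0 < r -> modulus_convexity d a r eps \is a fin_num ->
  d a p <= r -> d a q <= r -> eps * r <= d p q -> is_midpoint d p q m ->
  d a m <= r - fine (modulus_convexity d a r eps) * r.
Proof.
move=> r0 mc_fin ap aq pq mpq.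
have := modulus_convexity_le_midpoint ap aq pq mpq.
rewrite -(fineK mc_fin) lee_fin -(ler_pM2r r0) mulrBl mul1r mulfVK ?gt_eqF //.
lra.
Qed.

Lemma weakly_uniformly_convex_midpoint_lt {a p q m : Y} {r : R} :
  weakly_uniformly_convex d -> 0 < r -> 0 < d p q ->
  d a p <= r -> d a q <= r -> is_midpoint d p q m -> d a m < r.
Proof.
move=> wuc r0 pq0 ap aq mpq.
pose eps := Num.min (d p q / r) 2.
have eps_range : 0 < eps <= 2 by rewrite lt_min ge_min lexx orbT andbT divr_gt0 //=.
have eps_pq : eps * r <= d p q by rewrite -ler_pdivlMr // ge_min lexx.
have mc0 := wuc a r eps r0 eps_range.
have mc_fin := modulus_convexity_fin_num mc0 ap aq eps_pq mpq.
have delta0 : 0 < fine (modulus_convexity d a r eps).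
  by rewrite -lte_fin fineK.
have := modulus_convexity_midpoint_le r0 mc_fin ap aq eps_pq mpq.
by have := mulr_gt0 delta0 r0; lra.
Qed.

Lemma on_geodesic_segment_dist {y z w : Y} :
  on_geodesic_segment d y z w -> d y w + d w z = d y z.
Proof.
move=> [g [l [[l0 [<- [<- gd]]] [t [/andP[t0 tl] ->]]]]].
rewrite !gd ?lexx ?l0 ?t0 ?tl // !sub0r !normrN distrC !ger0_norm ?subr_ge0 //.
by rewrite addrC subrK.
Qed.

End ModulusConvexity.

Theorem lemma2p1 (R : realType) (Y : Type) (d : Y -> Y -> R)
  (hmet : is_metric d) (hgeo : geodesic_space d)
  (hwuc : weakly_uniformly_convex d)
  (hinf : forall (a : Y) (eps : R), 0 < eps -> exists s : R, 0 < s /\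
     (0 < ereal_inf [set modulus_convexity d a r eps | r in [set r : R | (s <= r)%R]])%E) :
  (* (C1) *)
  (forall (y : Y) (r eps : R), 0 < r -> 0 < eps <= 2 ->
    forall x z w : Y, d x y = r -> r <= d y z ->
      on_geodesic_segment d y z w -> d y w = r ->
      ((r + d x z)%:E <= (d y z)%:E + modulus_convexity d y r eps * r%:E)%E ->
      d w x <= eps * r) /\
  (* (C2) *)
  (forall (y : Y) (eps : R), 0 < eps <= 2 -> exists s : R, 0 < s /\
     (0 < ereal_inf [set modulus_convexity d y r eps | r in [set r : R | (s <= r)%R]])%E).
Proof.
have [d0 [_ [dC dT]]] := hmet.
split; last by move=> y eps /andP[eps0 _]; exact: hinf.
move=> y r eps r0 eps_range x z w xy _ wyz yw hyp.
rewrite leNgt; apply/negP => wx.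
have [g [l gwx]] := hgeo w x; pose m := g (l / 2).
have mwx : is_midpoint d w x m by exists g, l.
have yx : d y x <= r by rewrite dC xy.
have yw_le : d y w <= r by rewrite yw.
have mc0 := hwuc y r eps r0 eps_range.
have mc_fin := modulus_convexity_fin_num mc0 yw_le yx (ltW wx) mwx.
have ym := modulus_convexity_midpoint_le r0 mc_fin yw_le yx (ltW wx) mwx.
have delta0 : 0 < fine (modulus_convexity d y r eps).
  by rewrite -lte_fin fineK.
rewrite -(fineK mc_fin) -EFinM -EFinD lee_fin in hyp.
rewrite -(on_geodesic_segment_dist wyz) yw in hyp.
pose rho := d w z + fine (modulus_convexity d y r eps) * r.
have delta_r0 := mulr_gt0 delta0 r0.
have zm : d z m < rho.
  apply: (weakly_uniformly_convex_midpoint_lt hwuc _ _ _ _ mwx).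
  - by rewrite /rho; have := d0 w z; lra.
  - by have := mulr_gt0 (andP eps_range).1 r0; lra.
  - by rewrite dC /rho; lra.
  - by rewrite dC /rho; lra.
have := dT y m z; rewrite -(on_geodesic_segment_dist wyz) yw (dC m z).
by move: zm ym; rewrite /rho; lra.
Qed.
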